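(* Claimwise stability does not imply ex-post stability or fractional stability: there exist a set $N$ of $n$ agents and a set $O$ of $n$ objects with strict preferences $\succ_i$ over $O$ ($i\in N$) and strict priorities $\succ_o$ over $N$ ($o\in O$), and a random matching $p$, such that $p$ is claimwise stable but neither ex-post stable nor fractionally stable.
   Context: A random matching is an $n\times n$ bistochastic matrix $p=[p(i,o)]_{i\in N,o\in O}$ (nonnegative entries, every row and every column summing to $1$); it is deterministic if all entries lie in $\{0,1\}$. A deterministic matching $p$ is stable if there exist no $i,j\in N$, $o,o'\in O$ with $p(i,o')=1$, $p(j,o)=1$, $o\succ_i o'$, $i\succ_o j$. A random matching is ex-post stable if it can be written as $\sum_{j=1}^k\lambda_jP_j$ with each $P_j$ a stable deterministic matching, $\lambda_j\in(0,1]$, $\sum_j\lambda_j=1$. It is fractionally stable if for every $(i,o)\in N\times O$, $\sum_{o':o'\succ_i o}p(i,o')\ge\sum_{j:i\succ_o j}p(j,o)$. It is claimwise stable if for every $(i,o)\in N\times O$ and every $j\in N$ with $i\succ_o j$, $\sum_{o':o'\succ_i o}p(i,o')\ge p(j,o)$. *)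

(* Agents N = 'I_n, objects O = 'I_n (two separate roles).
   A random matching is a matrix p : 'M[R]_n with p i o = p(i,o),
   rows indexed by agents, columns by objects. *)
From HB Require Import structures.
From mathcomp Require Import all_boot all_order all_algebra.
From mathcomp Require Import reals.
Set Implicit Arguments. Unset Strict Implicit. Unset Printing Implicit Defensive.
Import Order.TTheory GRing.Theory Num.Theory.
Local Open Scope ring_scope.

(* A strict (linear) order on a finite type: r x y reads "x is strictly
   preferred to y". *)
Definition strict_linear_order (T : finType) (r : rel T) : Prop :=
  irreflexive r /\ transitive r /\ (forall x y, x != y -> r x y || r y x).

Section Matching.
Variables (R : realType) (n : nat).
Variable pref : 'I_n -> rel 'I_n.  (* pref i o o' : o >_i o' *)
Variable prio : 'I_n -> rel 'I_n.  (* prio o i j  : i >_o j  *)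

Definition bistochastic (p : 'M[R]_n) : Prop :=
  (forall i o, 0 <= p i o) /\
  (forall i, \sum_(o < n) p i o = 1) /\
  (forall o, \sum_(i < n) p i o = 1).

Definition deterministic (p : 'M[R]_n) : Prop :=
  bistochastic p /\ (forall i o, p i o = 0 \/ p i o = 1).

Definition stable_det (p : 'M[R]_n) : Prop :=
  deterministic p /\
  ~ (exists i j o o', [/\ p i o' = 1, p j o = 1, pref i o o' & prio o i j]).

Definition ex_post_stable (p : 'M[R]_n) : Prop :=
  exists (k : nat) (lam : 'I_k -> R) (P : 'I_k -> 'M[R]_n),
    [/\ forall j, stable_det (P j),
        forall j, 0 < lam j <= 1,
        \sum_(j < k) lam j = 1
      & p = \sum_(j < k) lam j *: P j].

Definition fractionally_stable (p : 'M[R]_n) : Prop :=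
  forall i o,
    \sum_(o' < n | pref i o' o) p i o' >= \sum_(j < n | prio o i j) p j o.

Definition claimwise_stable (p : 'M[R]_n) : Prop :=
  forall i o j, prio o i j -> \sum_(o' < n | pref i o' o) p i o' >= p j o.

End Matching.

(** An ex-post stable matching is a convex combination of stable deterministic
    matchings, each of which is fractionally stable, and fractional stability is
    preserved by nonnegative combinations; so ex-post stability implies
    fractional stability.  It therefore suffices to exhibit a claimwise stable
    random matching that is not fractionally stable.  With three agents and
    three objects, agent 0 ranking the objects 2 > 0 > 1 and object 0 ranking
    the agents 0 > 1 > 2, the matching below gives object 0 to agents 1 and 2
    with probability 1/2 each, while agent 0 gets the better object 2 only with
    probability 1/2: the fractional constraint at (0, 0) reads 1/2 >= 1. *)

From HB Require Import structures.
From mathcomp Require Import all_boot all_order all_algebra.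
From mathcomp Require Import reals.
From mathcomp Require Import lra.
Set Implicit Arguments. Unset Strict Implicit. Unset Printing Implicit Defensive.
Import Order.TTheory GRing.Theory Num.Theory.
Local Open Scope ring_scope.

Section StableMatchings.
Variables (R : realType) (n : nat).
Variables (pref prio : 'I_n -> rel 'I_n).

Lemma bistochastic_sum_col_le1 (p : 'M[R]_n) o (A : pred 'I_n) :
  bistochastic p -> \sum_(j | A j) p j o <= 1.
Proof.
move=> [p_ge0 [_ col1]].
by rewrite -(col1 o) [leRHS](bigID A) /= lerDl sumr_ge0.
Qed.

Lemma deterministic_row_matched (p : 'M[R]_n) i :
  deterministic p -> exists o, p i o = 1.
Proof.
move=> [[_ [row1 _]] p01].
have [o /eqP pio1|unmatched] := pickP (fun o => p i o == 1); first by exists o.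
suff : \sum_(o < n) p i o = 0 by rewrite row1 => /eqP; rewrite oner_eq0.
apply: big1 => o _; have := unmatched o.
by case: (p01 i o) => ->; rewrite ?eqxx.
Qed.

Lemma deterministic_col_inj (p : 'M[R]_n) o i j :
  deterministic p -> p i o = 1 -> p j o = 1 -> i = j.
Proof.
move=> [[p_ge0 [_ col1]] _] pio1 pjo1; apply/eqP/negPn/negP => neq_ij.
have := col1 o; rewrite (bigD1 i) // (bigD1 j) 1?eq_sym //= pio1 pjo1.
have : 0 <= \sum_(k < n | (k != i) && (k != j)) p k o by apply: sumr_ge0.
lra.
Qed.

Hypothesis prio_irr : forall o, irreflexive (prio o).
Hypothesis pref_total : forall i o o', o != o' -> pref i o o' || pref i o' o.

Lemma stable_det_fractionally_stable (p : 'M[R]_n) :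
  stable_det pref prio p -> fractionally_stable pref prio p.
Proof.
move=> [detp no_block] i o.
have [[p_ge0 _] p01] := detp.
have [j /andP[ij /eqP pjo1]|no_rival] := pickP (fun j => prio o i j && (p j o == 1)).
  have [o' pio'1] := deterministic_row_matched i detp.
  have neq_o'o : o' != o.
    apply: contraTneq ij => eq_o'o; rewrite eq_o'o in pio'1.
    by rewrite (deterministic_col_inj detp pio'1 pjo1) prio_irr.
  have pref_o' : pref i o' o.
    case/orP: (pref_total i neq_o'o) => // pref_o; case: no_block.
    by exists i, j, o, o'.
  apply: le_trans (bistochastic_sum_col_le1 _ _ detp.1) _.
  by rewrite (bigD1 o') //= pio'1 lerDl sumr_ge0.
rewrite big1 ?sumr_ge0 // => k ik; have := no_rival k.
by rewrite ik /=; case: (p01 k o) => ->; rewrite ?eqxx.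
Qed.

Lemma fractionally_stable_conic k (lam : 'I_k -> R) (P : 'I_k -> 'M[R]_n) :
  (forall l, 0 <= lam l) -> (forall l, fractionally_stable pref prio (P l)) ->
  fractionally_stable pref prio (\sum_(l < k) lam l *: P l).
Proof.
move=> lam_ge0 Pfs i o.
have entry a b : (\sum_(l < k) lam l *: P l) a b = \sum_(l < k) lam l * P l a b.
  by rewrite summxE; apply: eq_bigr => l _; rewrite mxE.
under eq_bigr do rewrite entry.
under [leRHS]eq_bigr do rewrite entry.
rewrite exchange_big [leRHS]exchange_big /=.
apply: ler_sum => l _; rewrite -!mulr_sumr.
exact: ler_wpM2l (lam_ge0 l) _ _ (Pfs l i o).
Qed.

Lemma ex_post_stable_fractionally_stable (p : 'M[R]_n) :
  ex_post_stable pref prio p -> fractionally_stable pref prio p.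
Proof.
move=> [k [lam [P [Pstable lam01 _ ->]]]].
apply: fractionally_stable_conic => l.
- by have /andP[/ltW] := lam01 l.
- exact/stable_det_fractionally_stable/Pstable.
Qed.

End StableMatchings.

Definition rank_order (T : eqType) (s : seq T) : rel T :=
  fun x y => (index x s < index y s)%N.

Lemma rank_order_strict_linear (T : finType) (s : seq T) :
  (forall x, x \in s) -> strict_linear_order (rank_order s).
Proof.
move=> s_full; split; first by move=> x; rewrite /rank_order ltnn.
split; first by move=> x y z; apply: ltn_trans.
move=> x y neq_xy; rewrite -neq_ltn.
by apply: contra neq_xy => /eqP/(index_inj x (s_full x) (s_full y))->.
Qed.

Definition agent_ranking (i : 'I_3) : seq 'I_3 :=
  match val i with 0 => [:: 2; 0; 1] | 1 => [:: 1; 0; 2] | _ => [:: 0; 2; 1] end.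

Definition object_ranking (o : 'I_3) : seq 'I_3 :=
  match val o with 0 => [:: 0; 1; 2] | 1 => [:: 0; 2; 1] | _ => [:: 1; 2; 0] end.

Definition agent_pref (i : 'I_3) : rel 'I_3 := rank_order (agent_ranking i).
Definition object_prio (o : 'I_3) : rel 'I_3 := rank_order (object_ranking o).

Definition excluded (i : 'I_3) : 'I_3 :=
  match val i with 0 => 0 | 1 => 2 | _ => 1 end.

Definition half_matching (R : realType) : 'M[R]_3 :=
  \matrix_(i, o) (if o == excluded i then 0 else 2^-1).

Lemma sum_ord3 (R : realType) (A : pred 'I_3) (F : 'I_3 -> R) :
  \sum_(o < 3 | A o) F o =
  (if A 0 then F 0 else 0) + (if A 1 then F 1 else 0) + (if A 2 then F 2 else 0).
Proof.
rewrite big_mkcond !big_ord_recr big_ord0 /= add0r.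
by congr (_ + _ + _); congr (if A _ then F _ else _); apply: val_inj.
Qed.

Theorem proposition10 (R : realType) :
  exists (n : nat) (pref : 'I_n -> rel 'I_n) (prio : 'I_n -> rel 'I_n)
         (p : 'M[R]_n),
    [/\ forall i, strict_linear_order (pref i),
        forall o, strict_linear_order (prio o),
        bistochastic p,
        claimwise_stable pref prio p
      & ~ ex_post_stable pref prio p /\ ~ fractionally_stable pref prio p].
Proof.
have pref_order i : strict_linear_order (agent_pref i).
  apply: rank_order_strict_linear => x.
  by case: i => [[|[|[|//]]] ?]; case: x => [[|[|[|//]]] ?].
have prio_order o : strict_linear_order (object_prio o).
  apply: rank_order_strict_linear => x.
  by case: o => [[|[|[|//]]] ?]; case: x => [[|[|[|//]]] ?].
have not_fs : ~ fractionally_stable agent_pref object_prio (half_matching R).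
  by move=> /(_ 0 0); rewrite !sum_ord3 /= !mxE /=; lra.
exists 3, agent_pref, object_prio, (half_matching R); split => //.
- split; first by move=> i o; rewrite mxE; case: ifP; rewrite ?invr_ge0 ?ler0n.
  by split => -[[|[|[|//]]] ?]; rewrite sum_ord3 /= !mxE /=; lra.
- move=> [[|[|[|//]]] ?] [[|[|[|//]]] ?] [[|[|[|//]]] ?] //= _;
    rewrite sum_ord3 /= !mxE /=; lra.
- split => //; apply: contra_not not_fs.
  apply: ex_post_stable_fractionally_stable.
  + by move=> o; have [] := prio_order o.
  + by move=> i; have [_ []] := pref_order i.
Qed.
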